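(* Let $R$ be an associative ring with unity, $\sigma$ an endomorphism of $R$ and $\delta$ a $\sigma$-derivation of $R$. Assume $R$ is right p.q.-Baer and $R$ satisfies one of the following: (i) $R$ is $(\sigma,\delta)$-skew Armendariz and satisfies $(\mathcal{C}_\sigma)$; (ii) $\mathcal{S}_\ell(R)=\mathcal{B}(R)$, $\sigma(Re)\subseteq Re$ for all $e\in\mathcal{B}(R)$, and $R$ satisfies $(\mathcal{C}_\sigma)$; (iii) $R$ is $\sigma$-rigid. Then the Ore extension $R[x;\sigma,\delta]$ is right p.q.-Baer.
   Context: A $\sigma$-derivation is an additive map $\delta$ with $\delta(ab)=\sigma(a)\delta(b)+\delta(a)b$. $R[x;\sigma,\delta]$ is the ring of polynomials $\sum a_ix^i$ (coefficients on the left) with $xa=\sigma(a)x+\delta(a)$. $R$ is $(\sigma,\delta)$-skew Armendariz if whenever $p=\sum_{i=0}^n a_ix^i$, $q=\sum_{j=0}^m b_jx^j\in R[x;\sigma,\delta]$ satisfy $pq=0$, then $a_ix^ib_jx^j=0$ in $R[x;\sigma,\delta]$ for all $i,j$. $R$ satisfies $(\mathcal{C}_\sigma)$ if $a\sigma(b)=0$ implies $ab=0$ for all $a,b\in R$. $\mathcal{S}_\ell(R)$ is the set of idempotents $e$ with $ere=re$ for all $r$; $\mathcal{B}(R)$ is the set of central idempotents. $R$ is $\sigma$-rigid if $a\sigma(a)=0$ implies $a=0$. A ring $T$ is right p.q.-Baer if for every $a\in T$ the right annihilator $\{t\in T\mid aTt=0\}$ is generated as a right ideal by an idempotent. *)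

From HB Require Import structures.
From mathcomp Require Import all_boot all_algebra.
Set Implicit Arguments. Unset Strict Implicit. Unset Printing Implicit Defensive.
Import GRing.Theory.
Local Open Scope ring_scope.

(* Ore extension R[x; sigma, delta], carrier {poly R} (coefficients on the left),
   with multiplication determined by  x a = sigma(a) x + delta(a). *)
Section Ore.
Variable R : nzRingType.
Variables (sigma delta : R -> R).

Definition ore_xmul (q : {poly R}) : {poly R} :=
  map_poly sigma q * 'X + map_poly delta q.

Definition ore_mul (p q : {poly R}) : {poly R} :=
  \sum_(i < size p) (p`_i)%:P * iter (i : nat) ore_xmul q.

Definition ore_mono (a : R) (i : nat) : {poly R} := a%:P * 'X^i.

Definition sigma_derivation : Prop :=
  (forall a b, delta (a + b) = delta a + delta b) /\
  (forall a b, delta (a * b) = sigma a * delta b + delta a * b).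

Definition skew_Armendariz : Prop :=
  forall p q : {poly R}, ore_mul p q = 0 ->
    forall i j, ore_mul (ore_mono p`_i i) (ore_mono q`_j j) = 0.

Definition cond_C : Prop := forall a b : R, a * sigma b = 0 -> a * b = 0.

Definition sigma_rigid : Prop := forall a : R, a * sigma a = 0 -> a = 0.
End Ore.

Definition is_idem (R : nzRingType) (e : R) := e * e = e.

Definition in_Sl (R : nzRingType) (e : R) := is_idem e /\ forall r, e * r * e = r * e.
Definition in_B (R : nzRingType) (e : R) := is_idem e /\ forall r, e * r = r * e.

Definition right_pq_Baer (T : Type) (mul : T -> T -> T) (zero : T) : Prop :=
  forall a : T, exists e : T, mul e e = e /\
    forall t : T, (forall s : T, mul (mul a s) t = zero) <-> exists u : T, t = mul e u.

From HB Require Import structures.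
From mathcomp Require Import all_boot all_algebra.
Set Implicit Arguments. Unset Strict Implicit. Unset Printing Implicit Defensive.
Import GRing.Theory.
Local Open Scope ring_scope.

(* Only (C_sigma) is needed: it is assumed in (i) and (ii), and sigma-rigidity implies it.
   For a in R[x; sigma, delta], right p.q.-Baerness of R gives a left semicentral idempotent e
   with e R = r(a_0 R + ... + a_n R).  (C_sigma) forces sigma(e) = e sigma(e) and
   delta(e) = e delta(e), so e R[x] is stable under left multiplication by x and is therefore
   killed by a R[x].  Conversely, if a R[x] t = 0, a downward induction on i shows
   a_i R t_m = 0 for the leading coefficient t_m of t, so t_m lies in e R; subtracting
   t_m x^m lowers the degree, and induction gives t in e R[x]. *)

Section OreExtension.
Variable R : nzRingType.
Variable sigma : {rmorphism R -> R}.
Variable delta : R -> R.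
Hypothesis delta_der : sigma_derivation sigma delta.

Local Notation xmul := (ore_xmul sigma delta).
Local Notation omul := (ore_mul sigma delta).

Lemma deltaD a b : delta (a + b) = delta a + delta b.
Proof. by case: delta_der. Qed.

Lemma deltaM a b : delta (a * b) = sigma a * delta b + delta a * b.
Proof. by case: delta_der. Qed.

Lemma delta0 : delta 0 = 0.
Proof. by apply: (addrI (delta 0)); rewrite -deltaD !addr0. Qed.

Lemma deltaB a b : delta (a - b) = delta a - delta b.
Proof. by apply: (addIr (delta b)); rewrite -deltaD !subrK. Qed.

Lemma coef_ore_xmul (v : {poly R}) k :
  (xmul v)`_k = (if k is k'.+1 then sigma v`_k' else 0) + delta v`_k.
Proof.
by rewrite /ore_xmul coefD coefMX (coef_map_id0 _ _ delta0) coef_map; case: k.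
Qed.

Lemma ore_xmulB (u v : {poly R}) : xmul (u - v) = xmul u - xmul v.
Proof.
apply/polyP=> k; rewrite coefB !coef_ore_xmul !coefB deltaB.
case: k => [|k]; first by rewrite !add0r.
by rewrite coefB rmorphB addrACA opprD.
Qed.

Lemma iter_ore_xmulB n (u v : {poly R}) :
  iter n xmul (u - v) = iter n xmul u - iter n xmul v.
Proof. by elim: n => [|n IH] //=; rewrite IH ore_xmulB. Qed.

Lemma ore_mul_widen (p v : {poly R}) N : (size p <= N)%N ->
  omul p v = \sum_(i < N) (p`_i)%:P * iter i xmul v.
Proof.
move=> leN; rewrite /ore_mul (big_ord_widen N (fun i => (p`_i)%:P * iter i xmul v)) //.
rewrite big_mkcond; apply: eq_bigr => i _; case: ltnP => // le_p_i.
by rewrite nth_default // mul0r.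
Qed.

Lemma ore_mulBr (w u v : {poly R}) : omul w (u - v) = omul w u - omul w v.
Proof. by rewrite /ore_mul -sumrB; apply: eq_bigr => i _; rewrite iter_ore_xmulB mulrBr. Qed.

Lemma ore_mulCl c (t : {poly R}) : omul c%:P t = c%:P * t.
Proof. by rewrite (ore_mul_widen _ (size_polyC_leq1 c)) big_ord1 /= coefC. Qed.

Lemma coef_ore_mul (p v : {poly R}) k :
  (omul p v)`_k = \sum_(i < size p) p`_i * (iter i xmul v)`_k.
Proof. by rewrite /ore_mul coef_sum; apply: eq_bigr => i _; rewrite coefCM. Qed.

Lemma iter_rmorphM n a b : iter n sigma (a * b) = iter n sigma a * iter n sigma b.
Proof. by elim: n => [|n IH] //=; rewrite IH rmorphM. Qed.

Lemma size_iter_ore_xmul (v : {poly R}) m j : (size v <= m.+1)%N ->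
  (size (iter j xmul v) <= m.+1 + j)%N.
Proof.
move=> le_v; elim: j => [|j IH]; first by rewrite addn0.
apply/leq_sizeP => -[|k]; first by rewrite addnS.
rewrite addnS ltnS => le_k; rewrite /= coef_ore_xmul.
by rewrite !nth_default ?rmorph0 ?delta0 ?addr0 // (leq_trans IH) // leqW.
Qed.

Lemma lead_coef_iter_ore_xmul (v : {poly R}) m j : (size v <= m.+1)%N ->
  (iter j xmul v)`_(m + j) = iter j sigma v`_m.
Proof.
move=> le_v; elim: j => [|j IH]; first by rewrite addn0.
rewrite addnS /= coef_ore_xmul IH [_`_(m + j).+1]nth_default ?delta0 ?addr0 //.
by rewrite -addSn size_iter_ore_xmul.
Qed.

Lemma size_ore_mul (w v : {poly R}) m :
  (size v <= m.+1)%N -> (size (omul w v) <= size w + m)%N.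
Proof.
move=> le_v; apply/leq_sizeP => k le_k; rewrite coef_ore_mul big1 // => j _.
rewrite [_`_k]nth_default ?mulr0 //; apply: leq_trans (size_iter_ore_xmul j le_v) _.
by apply: leq_trans le_k; rewrite addSnnS addnC leq_add2r.
Qed.

Lemma coef_ore_mul_top (w t : {poly R}) i m :
  (size w <= i.+1)%N -> (size t <= m.+1)%N ->
  (omul w t)`_(i + m) = w`_i * iter i sigma t`_m.
Proof.
move=> le_w le_t; rewrite (ore_mul_widen _ le_w) coef_sum big_ord_recr /=.
rewrite coefCM addnC lead_coef_iter_ore_xmul // big1 ?add0r // => j _.
rewrite coefCM [_`_(m + i)]nth_default ?mulr0 //.
apply: leq_trans (size_iter_ore_xmul j le_t) _.
by rewrite addSnnS leq_add2l.
Qed.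

End OreExtension.

Definition rann_idem {R : nzRingType} (f : nat -> R) (N : nat) (e : R) : Prop :=
  in_Sl e /\ forall y, (forall i, (i < N)%N -> forall r, f i * r * y = 0) <-> y = e * y.

Section RightPqBaer.
Variable R : nzRingType.
Hypothesis pq_Baer : right_pq_Baer (@GRing.mul R) 0.

Lemma right_pq_Baer_Sl (a : R) :
  exists e, in_Sl e /\ forall y, (forall r, a * r * y = 0) <-> y = e * y.
Proof.
have [e [idem_e ann_e]] := pq_Baer a.
have ann_eR y : (forall r, a * r * y = 0) <-> y = e * y.
  split=> [/ann_e [u ->] | ey]; first by rewrite mulrA idem_e.
  by apply/ann_e; exists y.
exists e; split=> //; split=> // r; rewrite -mulrA; apply/esym/ann_eR => s.
by rewrite mulrA -(mulrA a); apply: (proj2 (ann_eR e)); rewrite idem_e.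
Qed.

Lemma exists_rann_idem (f : nat -> R) N : exists e, rann_idem f N e.
Proof.
elim: N => [|N [el [[idem_l Sl_l] ann_l]]].
  exists 1; split; first by split=> [|r]; rewrite /is_idem ?mulr1 ?mul1r.
  by move=> y; split=> [_|_ //]; rewrite mul1r.
have [ea [[idem_a Sl_a] ann_a]] := right_pq_Baer_Sl (f N).
exists (ea * el); split; first split.
- by rewrite /is_idem -mulrA [el * _]mulrA Sl_l mulrA idem_a.
- move=> r; have -> : ea * el * r * (ea * el) = ea * (el * (r * ea) * el).
    by rewrite !mulrA.
  by rewrite Sl_l !mulrA Sl_a.
move=> y; split=> [ann_y | y_eq i].
  have /ann_a ya : forall r, f N * r * y = 0 by apply: ann_y.
  have /ann_l yl : forall i, (i < N)%N -> forall r, f i * r * y = 0.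
    by move=> i lt_iN; apply: ann_y; apply: ltnW.
  by rewrite -mulrA -yl -ya.
have yl : y = el * y by rewrite y_eq -Sl_l !mulrA idem_l.
rewrite ltnS leq_eqVlt => /orP[/eqP -> | lt_iN]; last exact: (proj2 (ann_l y) yl).
by apply/ann_a; rewrite y_eq !mulrA idem_a.
Qed.

End RightPqBaer.

Section CondC.
Variable R : nzRingType.
Variable sigma : {rmorphism R -> R}.
Variable delta : R -> R.
Hypothesis delta_der : sigma_derivation sigma delta.
Hypothesis condC : cond_C sigma.
Hypothesis pq_Baer : right_pq_Baer (@GRing.mul R) 0.

Local Notation xmul := (ore_xmul sigma delta).
Local Notation omul := (ore_mul sigma delta).

Lemma cond_C_iter n a c : a * iter n sigma c = 0 -> a * c = 0.
Proof. by elim: n => [|n IH] //= /condC; apply: IH. Qed.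

Lemma Sl_sigma e : in_Sl e -> sigma e = e * sigma e.
Proof.
move=> [idem_e Sl_e].
have h1 : (1 - e) * sigma e * (1 - e) = 0.
  by apply: condC; rewrite -mulrA -rmorphM mulrBr mulr1 idem_e subrr rmorph0 mulr0.
have h2 : (1 - e) * sigma e * e = 0.
  by rewrite -mulrA -Sl_e !mulrA mulrBl mul1r idem_e subrr !mul0r.
have : (1 - e) * sigma e * ((1 - e) + e) = 0 by rewrite mulrDr h1 h2 addr0.
by rewrite subrK mulr1 mulrBl mul1r => /eqP; rewrite subr_eq0 => /eqP.
Qed.

Lemma Sl_delta e : in_Sl e -> delta e = e * delta e.
Proof.
move=> Sl_e; have [idem_e _] := Sl_e.
have de : delta e = e * (sigma e * delta e + delta e * e).
  rewrite {1}(_ : e = e * e) // (deltaM delta_der) mulrDr !mulrA.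
  by rewrite -(Sl_sigma Sl_e) -(proj2 Sl_e).
by rewrite {2}de mulrA idem_e -de.
Qed.

Lemma ore_xmul_Sl_closed e v : in_Sl e -> v = e%:P * v -> xmul v = e%:P * xmul v.
Proof.
move=> Sl_e v_eq; have coef_v j : v`_j = e * v`_j by rewrite {1}v_eq coefCM.
have sigma_closed a : a = e * a -> sigma a = e * sigma a.
  by move=> a_eq; rewrite a_eq rmorphM mulrA -(Sl_sigma Sl_e).
have delta_closed a : a = e * a -> delta a = e * delta a.
  move=> a_eq; rewrite a_eq (deltaM delta_der) mulrDr !mulrA.
  by rewrite -(Sl_sigma Sl_e) -(Sl_delta Sl_e).
apply/polyP => -[|k]; rewrite coefCM !(coef_ore_xmul delta_der) mulrDr -delta_closed //.
  by rewrite mulr0.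
by rewrite -sigma_closed.
Qed.

Lemma iter_ore_xmul_Sl_closed e v n : in_Sl e -> v = e%:P * v ->
  iter n xmul v = e%:P * iter n xmul v.
Proof. by move=> Sl_e v_eq; elim: n => [|n IH] //=; apply: ore_xmul_Sl_closed. Qed.

Lemma ore_mul_Sl_eq e (p q s : {poly R}) : in_Sl e -> s = e%:P * s ->
  (forall j, p`_j * e = q`_j * e) -> omul p s = omul q s.
Proof.
move=> Sl_e s_eq pq_e; set N := maxn (size p) (size q).
rewrite (ore_mul_widen sigma delta _ (leq_maxl _ _ : (size p <= N)%N)).
rewrite (ore_mul_widen sigma delta _ (leq_maxr _ _ : (size q <= N)%N)).
apply: eq_bigr => j _; rewrite (iter_ore_xmul_Sl_closed j Sl_e s_eq).
by rewrite !mulrA -!polyCM pq_e.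
Qed.

Lemma ore_mul_rann_idem e (p s u : {poly R}) :
  rann_idem (fun i => p`_i) (size p) e -> u = e%:P * u -> omul (omul p s) u = 0.
Proof.
move=> [Sl_e ann_e] u_eq; rewrite (ore_mul_Sl_eq (q := 0) Sl_e u_eq).
  by rewrite /ore_mul size_poly0 big_ord0.
move=> k; rewrite coef0 mul0r coef_ore_mul mulr_suml big1 // => i _.
by apply: (proj2 (ann_e e)) => //; rewrite (proj1 Sl_e).
Qed.

Lemma rann_ore_mul_lead_coef (p t : {poly R}) m : size t = m.+1 ->
  (forall s, omul (omul p s) t = 0) -> forall i r, p`_i * r * t`_m = 0.
Proof.
move=> size_t ann_t.
suff IH d i : (size p <= i + d)%N -> forall r, p`_i * r * t`_m = 0.
  by move=> i; apply: (IH (size p)); rewrite leq_addl.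
elim: d i => [|d IH] i le_p r; first by rewrite nth_default ?mul0r // -(addn0 i).
(* Against the constant s = r g, where g is the idempotent of p_(i+1), ..., p_n, the product
   p s only sees p_0, ..., p_i, and its top coefficient p_i sigma^i(r g) meets sigma^i(t_m). *)
have [g [Sl_g ann_g]] := exists_rann_idem pq_Baer
  (fun j => if (i < j)%N then p`_j else 0) (size p).
have tg : t`_m = g * t`_m.
  apply/ann_g => j _ r'; case: ifP => // lt_ij; last by rewrite !mul0r.
  by apply: IH; apply: leq_trans le_p _; rewrite addnS -addSn leq_add2r.
have pg j : p`_j * g = (take_poly i.+1 p)`_j * g.
  rewrite coef_take_poly; case: ltnP => // lt_ij.
  have [lt_jp | le_pj] := ltnP j (size p); last by rewrite nth_default ?mul0r.
  have := proj2 (ann_g g) (esym (proj1 Sl_g)) j lt_jp 1.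
  by rewrite lt_ij mulr1 mul0r.
pose s := (r * g)%:P.
have sg : s = g%:P * s by rewrite -polyCM mulrA (proj2 Sl_g).
have ps_trunc := ore_mul_Sl_eq Sl_g sg pg.
have size_ps : (size (omul p s) <= i.+1)%N.
  rewrite ps_trunc; apply: leq_trans (size_ore_mul delta_der _ (size_polyC_leq1 _)) _.
  by rewrite addn0 size_take_poly.
have coef_ps : (omul p s)`_i = p`_i * iter i sigma (r * g).
  have := coef_ore_mul_top delta_der (size_take_poly i.+1 p) (size_polyC_leq1 (r * g)).
  by rewrite ps_trunc addn0 coef_take_poly ltnSn coefC.
have := congr1 (fun q : {poly R} => q`_(i + m)) (ann_t s).
rewrite /= (coef_ore_mul_top delta_der size_ps (eq_leq size_t)) coef_ps coef0.
by rewrite -mulrA -iter_rmorphM -(mulrA r) -tg => /cond_C_iter; rewrite mulrA.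
Qed.

Lemma rann_ore_mul_sub e (p t : {poly R}) : rann_idem (fun i => p`_i) (size p) e ->
  (forall s, omul (omul p s) t = 0) -> t = e%:P * t.
Proof.
move=> rann_e; have [_ ann_e] := rann_e.
move: {2}(size t) (leqnn (size t)) => n; elim: n t => [|n IH] t le_t ann_t.
  by move: le_t; rewrite size_poly_leq0 => /eqP ->; rewrite mulr0.
case size_t: (size t) => [|m].
  by move/eqP: size_t; rewrite size_poly_eq0 => /eqP ->; rewrite mulr0.
have lead_e : t`_m = e * t`_m.
  by apply/ann_e => i _ r; apply: rann_ore_mul_lead_coef size_t ann_t i r.
pose u := (t`_m)%:P * 'X^m.
have u_e : u = e%:P * u by rewrite /u mulrA -polyCM -lead_e.
have size_tu : (size (t - u)%R <= n)%N.
  apply: (@leq_trans m); last by rewrite -ltnS -size_t.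
  apply/leq_sizeP => k; rewrite coefB coefCM coefXn.
  rewrite leq_eqVlt => /orP[/eqP <- | lt_mk].
    by rewrite eqxx mulr1 subrr.
  by rewrite gtn_eqF // mulr0 subr0 nth_default // size_t.
have ann_tu s : omul (omul p s) (t - u) = 0.
  by rewrite (ore_mulBr delta_der) ann_t (ore_mul_rann_idem _ rann_e u_e) subrr.
have := IH _ size_tu ann_tu; rewrite mulrBr -u_e => /eqP.
by rewrite subr_eq subrK => /eqP.
Qed.

End CondC.

Lemma sigma_rigid_cond_C (R : nzRingType) (sigma : {rmorphism R -> R}) :
  sigma_rigid sigma -> cond_C sigma.
Proof.
move=> rigid_sigma.
have reduced (a : R) : a * a = 0 -> a = 0.
  move=> aa; apply: (rigid_sigma); apply: (rigid_sigma).
  by rewrite rmorphM !mulrA -(mulrA a (sigma a)) -rmorphM aa rmorph0 mulr0 !mul0r.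
have zero_comm (a b : R) : a * b = 0 -> b * a = 0.
  by move=> ab; apply: (reduced); rewrite mulrA -(mulrA b) ab mulr0 mul0r.
move=> a b ab; apply: (zero_comm); apply: (rigid_sigma).
by rewrite rmorphM !mulrA -(mulrA b) ab mulr0 !mul0r.
Qed.

Theorem corollary3p4 (R : nzRingType) (sigma : {rmorphism R -> R}) (delta : R -> R) :
  sigma_derivation sigma delta ->
  right_pq_Baer (@GRing.mul R) 0 ->
  ( (skew_Armendariz sigma delta /\ cond_C sigma)
    \/ ((forall e : R, in_Sl e <-> in_B e) /\
        (forall e : R, in_B e -> forall r : R, exists s : R, sigma (r * e) = s * e) /\
        cond_C sigma)
    \/ sigma_rigid sigma ) ->
  right_pq_Baer (ore_mul sigma delta) 0.
Proof.
move=> delta_der pq_Baer hyps.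
have condC : cond_C sigma.
  by case: hyps => [[_ ?] | [[_ [_ ?]] | /sigma_rigid_cond_C]].
move=> a; have [e rann_e] := exists_rann_idem pq_Baer (fun i => a`_i) (size a).
have idem_e : e * e = e by case: rann_e => -[].
exists e%:P; split; first by rewrite ore_mulCl -polyCM idem_e.
move=> t; split=> [ann_t | [u ->] s].
  exists t; rewrite ore_mulCl.
  exact: (rann_ore_mul_sub delta_der condC pq_Baer rann_e ann_t).
rewrite ore_mulCl; apply: (ore_mul_rann_idem delta_der condC _ rann_e).
by rewrite mulrA -polyCM idem_e.
Qed.
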